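(* Let $n\ge1$, $G\geq1$, let $W$ be an $n\times G$ matrix and $Z$ an $n\times G$ matrix with entries in $\{0,1\}$ such that each row of $W$ has exactly one entry equal to $1$, and $Z_{ig}\le W_{ig}$ for all $i,g$. Let $n_g=\sum_iW_{ig}$ and $m_g=\sum_iZ_{ig}$, and suppose $m_g\geq 2$ and $n_g-m_g\geq2$ for all $g=1,\dots,G$. Let $M_W=I_n-W(W'W)^{-1}W'$, $P=M_WZ(Z'M_WZ)^{-1}Z'M_W$, $V=[Z,W]$ and $M_{Z,W}=I_n-V(V'V)^{-1}V'$. If $D$ is the $n\times n$ diagonal matrix with elements $$D_{ii}=\sum_{g=1}^G\frac{1}{n_g}W_{ig}\left[\frac{n_g-m_g}{m_g-1}Z_{ig}+\frac{m_g}{n_g-m_g-1}(1-Z_{ig})\right],$$ then $P_{ii}=[M_{Z,W}DM_{Z,W}]_{ii}$ for all $i=1,\dots,n$. *)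

From HB Require Import structures.
From mathcomp Require Import all_boot all_order all_algebra.
Set Implicit Arguments. Unset Strict Implicit. Unset Printing Implicit Defensive.
Import Order.TTheory GRing.Theory Num.Theory.
Local Open Scope ring_scope.

Definition annih (R : realFieldType) (n k : nat) (X : 'M[R]_(n, k)) : 'M[R]_n :=
  1%:M - X *m invmx (X^T *m X) *m X^T.

From HB Require Import structures.
From mathcomp Require Import all_boot all_order all_algebra ring lra.
Set Implicit Arguments. Unset Strict Implicit. Unset Printing Implicit Defensive.
Import Order.TTheory GRing.Theory Num.Theory.
Local Open Scope ring_scope.

(* Every row of W contains a single 1, so W is the incidence matrix of a map from
   units to groups, and Z that of the treated units; all matrices involved are
   block diagonal along the groups.  In a group with N units of which M are
   treated, M_W Z is the treatment indicator demeaned by M / N, which gives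
   P_ii = (N - M) / (N M) for a treated unit and M / (N (N - M)) otherwise.
   The columns of [Z, W] span the same space as the indicators of the 2G cells
   (group, treated or not), so M_{Z,W} is the annihilator of a cell incidence
   matrix.  Sandwiching a diagonal matrix that is constant on cells between two
   such annihilators yields D_ii (1 - 1 / s) on the diagonal, s being the size
   of the cell of i, and D is exactly the rescaling that turns this into P_ii. *)

Definition incidence_mx (R : pzRingType) n K (c : 'I_n -> 'I_K) (x : 'I_n -> R) :
  'M[R]_(n, K) := \matrix_(k, g) ((c k == g)%:R * x k).

Section IncidenceMatrix.
Variables (R : comPzRingType) (n K : nat) (c : 'I_n -> 'I_K).

Lemma sum_incidence_mx_col (x : 'I_n -> R) g :
  \sum_k incidence_mx c x k g = \sum_(k | c k == g) x k.
Proof.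
rewrite [RHS]big_mkcond; apply: eq_bigr => k _; rewrite mxE.
by case: eqP; rewrite ?(mul1r, mul0r).
Qed.

Lemma incidence_mxB (x y : 'I_n -> R) :
  incidence_mx c x - incidence_mx c y = incidence_mx c (fun k => x k - y k).
Proof. by apply/matrixP => k g; rewrite !mxE mulrBr. Qed.

Lemma incidence_mul_diag (x : 'I_n -> R) (d : 'rV[R]_K) :
  incidence_mx c x *m diag_mx d = incidence_mx c (fun k => x k * d 0 (c k)).
Proof.
apply/matrixP => k g; rewrite mul_mx_diag !mxE.
by case: eqP => [->|_]; rewrite ?(mul1r, mul0r).
Qed.

Lemma tr_incidence_mul (x y : 'I_n -> R) :
  (incidence_mx c x)^T *m incidence_mx c y
  = diag_mx (\row_g \sum_(k | c k == g) x k * y k).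
Proof.
apply/matrixP => g h; rewrite !mxE; case: eqVneq => [<-|ne_gh].
  rewrite mulr1n [RHS]big_mkcond; apply: eq_bigr => k _; rewrite !mxE.
  by case: eqP; rewrite ?(mul1r, mul0r).
rewrite mulr0n; apply: big1 => k _; rewrite !mxE.
case: (eqVneq (c k) g) => [ckg|_]; last by rewrite !mul0r.
by rewrite ckg (negbTE ne_gh) mul0r mulr0.
Qed.

Lemma incidence_mul_tr (x y : 'I_n -> R) :
  incidence_mx c x *m (incidence_mx c y)^T
  = \matrix_(j, k) ((c j == c k)%:R * (x j * y k)).
Proof.
apply/matrixP => j k; rewrite !mxE (bigD1 (c j)) //= big1 => [|g ne_g]; last first.
  by rewrite !mxE (eq_sym (c j)) (negbTE ne_g) !mul0r.
by rewrite !mxE eqxx (eq_sym (c k)) addr0 mul1r mulrCA.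
Qed.

End IncidenceMatrix.

Lemma incidence_mx_of_unit_rows (R : pzRingType) n K (W : 'M[R]_(n, K)) :
  (forall i g, W i g = 0 \/ W i g = 1) -> (forall i, exists! g, W i g = 1) ->
  exists c, W = incidence_mx c (fun _ => 1).
Proof.
move=> W01 /fin_all_exists[c Wc].
exists c; apply/matrixP => i g; rewrite mxE mulr1.
case: eqVneq => [<-|ne_g]; first by case: (Wc i).
case: (W01 i g) => // /(proj2 (Wc i)) eq_g.
by rewrite eq_g eqxx in ne_g.
Qed.

Lemma incidence_mx_of_le (R : numDomainType) n K (c : 'I_n -> 'I_K) (Z : 'M[R]_(n, K)) :
  (forall i g, Z i g = 0 \/ Z i g = 1) ->
  (forall i g, Z i g <= incidence_mx c (fun _ => 1) i g) ->
  exists z : 'I_n -> bool, Z = incidence_mx c (fun k => (z k)%:R).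
Proof.
move=> Z01 Zle; exists (fun k => Z k (c k) == 1); apply/matrixP => i g; rewrite mxE.
case: eqVneq => [<-|ne_g].
  by rewrite mul1r; case: (Z01 i (c i)) => ->; rewrite ?eqxx // eq_sym oner_eq0.
have := Zle i g; rewrite mxE (negbTE ne_g) !mul0r.
by case: (Z01 i g) => ->; rewrite ?ler10.
Qed.

Lemma invmx_right (R : comUnitRingType) n (A B : 'M[R]_n) : A *m B = 1%:M -> invmx A = B.
Proof.
move=> AB1; have [uA _] := mulmx1_unit AB1.
by rewrite -[invmx A]mulmx1 -AB1 mulmxA mulVmx // mul1mx.
Qed.

Section DiagonalInverse.
Variables (F : fieldType) (n : nat) (d : 'rV[F]_n).
Hypothesis d_neq0 : forall j, d 0 j != 0.

Lemma diag_mx_mulV : diag_mx d *m diag_mx (\row_j (d 0 j)^-1) = 1%:M.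
Proof.
by rewrite mulmx_diag; apply/matrixP => i j; rewrite !mxE mulfV //; case: eqP.
Qed.

Lemma unitmx_diag : diag_mx d \in unitmx.
Proof. by have [] := mulmx1_unit diag_mx_mulV. Qed.

Lemma invmx_diag : invmx (diag_mx d) = diag_mx (\row_j (d 0 j)^-1).
Proof. exact: invmx_right diag_mx_mulV. Qed.

End DiagonalInverse.

Section Annihilator.
Variables (R : realFieldType) (n k : nat).

Lemma trmx_annih (X : 'M[R]_(n, k)) : (annih X)^T = annih X.
Proof.
by rewrite /annih linearB /= trmx1 !trmx_mul trmxK trmx_inv trmx_mul trmxK mulmxA.
Qed.

Lemma annih_mulmx_unit (X : 'M[R]_(n, k)) (A : 'M[R]_k) :
  A \in unitmx -> X^T *m X \in unitmx -> annih (X *m A) = annih X.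
Proof.
move=> uA uXX; have uAt : A^T \in unitmx by rewrite unitmx_tr.
rewrite /annih trmx_mul.
have -> : invmx (A^T *m X^T *m (X *m A)) = invmx A *m invmx (X^T *m X) *m invmx A^T.
  apply: invmx_right; rewrite !mulmxA mulmxK // -(mulmxA A^T) mulmxK //.
  exact: mulmxV.
by rewrite !mulmxA mulmxK // mulmxKV.
Qed.

Variable c : 'I_n -> 'I_k.
Local Notation C := (incidence_mx c (fun _ => 1)).
Local Notation class_size g := (\sum_(l | c l == g) (1 : R)).
Hypothesis size_neq0 : forall g, class_size g != 0.

Lemma annih_incidence :
  annih C = 1%:M - C *m diag_mx (\row_g (class_size g)^-1) *m C^T.
Proof.
rewrite /annih tr_incidence_mul invmx_diag => [|g]; last first.
  by rewrite mxE; under eq_bigr do rewrite mulr1.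
congr (_ - C *m diag_mx _ *m _); apply/rowP => g.
by rewrite !mxE; under eq_bigr do rewrite mulr1.
Qed.

Lemma annih_incidenceE j l :
  annih C j l = (j == l)%:R - (c j == c l)%:R / class_size (c j).
Proof.
by rewrite annih_incidence incidence_mul_diag incidence_mul_tr !mxE mul1r mulr1.
Qed.

Lemma annih_incidence_diag_sandwich (d : 'rV[R]_n) :
  (forall j l, c j = c l -> d 0 j = d 0 l) ->
  forall i,
  (annih C *m diag_mx d *m annih C) i i = d 0 i * (1 - (class_size (c i))^-1).
Proof.
move=> d_const i.
have termE l : annih C i l * d 0 l * annih C l i =
    (if c l == c i then 1 else 0) * (d 0 i / class_size (c i) ^+ 2)
    + (if l == i then d 0 i * (1 - 2 / class_size (c i)) else 0).
  rewrite !annih_incidenceE; case: (eqVneq l i) => [->|ne_li].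
    by rewrite !eqxx /=; field.
  rewrite [c i == c l]eq_sym /=.
  case: (eqVneq (c l) (c i)) => [cli|_]; last by rewrite /= !(mul0r, subr0, addr0).
  by rewrite (d_const l i cli) cli /=; field.
rewrite mul_mx_diag mxE; under eq_bigr do rewrite mxE termE.
rewrite big_split /= -mulr_suml -!big_mkcond big_pred1_eq /=.
by field.
Qed.

End Annihilator.

Section GroupedTreatment.
Variables (R : realFieldType) (n G : nat) (grp : 'I_n -> 'I_G) (z : 'I_n -> bool).
Local Notation W := (incidence_mx grp (fun _ => 1 : R)).
Local Notation Z := (incidence_mx grp (fun k => (z k)%:R : R)).
Local Notation N g := (\sum_(k | grp k == g) (1 : R)).
Local Notation M g := (\sum_(k | grp k == g) ((z k)%:R : R)).
Hypotheses (M_gt0 : forall g, 0 < M g) (NM_gt0 : forall g, 0 < N g - M g).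

Lemma group_size_gt0 g : 0 < N g.
Proof. by have := M_gt0 g; have := NM_gt0 g; lra. Qed.

Lemma annih_groups_mul_treatment :
  annih W *m Z = incidence_mx grp (fun k => (z k)%:R - M (grp k) / N (grp k)).
Proof.
rewrite annih_incidence => [|g]; last by rewrite lt0r_neq0 ?group_size_gt0.
rewrite mulmxBl mul1mx -!mulmxA tr_incidence_mul mulmx_diag incidence_mul_diag.
rewrite incidence_mxB; apply/matrixP => k g; rewrite !mxE (eq_bigr _ (fun k _ => mul1r _)).
by rewrite mul1r [_^-1 * _]mulrC.
Qed.

Lemma treatment_partial_leverage i :
  (annih W *m Z *m invmx (Z^T *m annih W *m Z) *m Z^T *m annih W) i i
  = if z i then (N (grp i) - M (grp i)) / (N (grp i) * M (grp i))
    else M (grp i) / (N (grp i) * (N (grp i) - M (grp i))).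
Proof.
have ZtMWZ : Z^T *m annih W *m Z = diag_mx (\row_g (M g * (N g - M g) / N g)).
  rewrite -mulmxA annih_groups_mul_treatment tr_incidence_mul.
  congr diag_mx; apply/rowP => g; rewrite !mxE.
  transitivity (\sum_(k | grp k == g) (z k)%:R * (1 - M g / N g)).
    by apply: eq_bigr => k /eqP ->; case: (z k) => /=; ring.
  by rewrite -mulr_suml; field; rewrite lt0r_neq0 ?group_size_gt0.
have ZtMW : Z^T *m annih W = (annih W *m Z)^T by rewrite trmx_mul trmx_annih.
rewrite ZtMWZ -mulmxA ZtMW invmx_diag => [|g]; last first.
  by rewrite mxE !mulf_neq0 ?invr_eq0 ?lt0r_neq0 ?group_size_gt0 ?M_gt0 ?NM_gt0.
rewrite annih_groups_mul_treatment incidence_mul_diag incidence_mul_tr !mxE eqxx /=.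
have := M_gt0 (grp i); have := NM_gt0 (grp i); have := group_size_gt0 (grp i).
by case: (z i) => /= *; field; rewrite ?lt0r_neq0.
Qed.

Let cell k : 'I_(G + G) := if z k then lshift G (grp k) else rshift G (grp k).

Lemma incidence_cell : incidence_mx cell (fun _ => 1) = row_mx Z (W - Z).
Proof.
apply/matrixP => k j; case: (split_ordP j) => g ->;
  rewrite ?row_mxEl ?row_mxEr !mxE /cell; case: (z k);
  rewrite ?eq_lshift ?eq_rshift ?eq_lrshift ?eq_rlshift /=; ring.
Qed.

Lemma row_mx_treatment_groups :
  row_mx Z W = incidence_mx cell (fun _ => 1) *m block_mx 1%:M 1%:M 0 1%:M.
Proof.
by rewrite incidence_cell mul_row_block !mulmx1 mulmx0 addr0 addrC subrK.
Qed.

Lemma size_cell_lshift g : \sum_(k | cell k == lshift G g) 1 = M g.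
Proof.
rewrite big_mkcond [RHS]big_mkcond; apply: eq_bigr => k _; rewrite /cell.
by case: (z k); rewrite ?eq_lshift ?eq_rlshift; case: (grp k == g).
Qed.

Lemma size_cell_rshift g : \sum_(k | cell k == rshift G g) 1 = N g - M g.
Proof.
rewrite -sumrB big_mkcond [RHS]big_mkcond; apply: eq_bigr => k _; rewrite /cell.
by case: (z k); rewrite ?eq_rshift ?eq_lrshift; case: (grp k == g); rewrite ?subrr ?subr0.
Qed.

Lemma size_cell_neq0 j : \sum_(k | cell k == j) (1 : R) != 0.
Proof.
case: (split_ordP j) => g ->; rewrite lt0r_neq0 //.
  by rewrite size_cell_lshift.
by rewrite size_cell_rshift.
Qed.

Lemma annih_treatment_groups :
  annih (row_mx Z W) = annih (incidence_mx cell (fun _ => 1)).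
Proof.
rewrite row_mx_treatment_groups annih_mulmx_unit //.
  by rewrite unitmxE det_ublock !det1 mulr1 unitr1.
rewrite tr_incidence_mul unitmx_diag // => j.
by rewrite mxE (eq_bigr _ (fun k _ => mulr1 _)) size_cell_neq0.
Qed.

Lemma residual_sandwich_diag (d : 'rV[R]_n) :
  (forall j l, grp j = grp l -> z j = z l -> d 0 j = d 0 l) ->
  forall i, (annih (row_mx Z W) *m diag_mx d *m annih (row_mx Z W)) i i
    = d 0 i * (1 - (if z i then M (grp i) else N (grp i) - M (grp i))^-1).
Proof.
move=> d_const i; rewrite annih_treatment_groups annih_incidence_diag_sandwich.
- by rewrite /cell; case: (z i); rewrite ?size_cell_lshift ?size_cell_rshift.
- exact: size_cell_neq0.
move=> j l; rewrite /cell; case: (z j) (z l) (d_const j l) => [] [] d_jl /eqP;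
  by rewrite ?eq_lshift ?eq_rshift ?eq_lrshift ?eq_rlshift // => /eqP /d_jl ->.
Qed.

End GroupedTreatment.

Theorem lemma5 (R : realFieldType) (n G : nat)
  (W Z : 'M[R]_(n, G))
  (hn : (0 < n)%N) (hG : (0 < G)%N)
  (hW01 : forall i g, W i g = 0 \/ W i g = 1)
  (hZ01 : forall i g, Z i g = 0 \/ Z i g = 1)
  (hWrow : forall i, exists! g, W i g = 1)
  (hZW : forall i g, Z i g <= W i g)
  (hm : forall g, 2 <= \sum_i Z i g)
  (hnm : forall g, 2 <= \sum_i W i g - \sum_i Z i g) :
  let ng := fun g => \sum_i W i g in
  let mg := fun g => \sum_i Z i g in
  let MW := annih W in
  let P := MW *m Z *m invmx (Z^T *m MW *m Z) *m Z^T *m MW in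
  let V := row_mx Z W in
  let MZW := annih V in
  let D := diag_mx (\row_i \sum_g ((ng g)^-1 * W i g *
              ((ng g - mg g) / (mg g - 1) * Z i g
               + mg g / (ng g - mg g - 1) * (1 - Z i g)))) in
  forall i, P i i = (MZW *m D *m MZW) i i.
Proof.
have [grp W_eq] := incidence_mx_of_unit_rows hW01 hWrow; subst W.
have [z Z_eq] := incidence_mx_of_le hZ01 hZW; subst Z.
pose N g := \sum_(k | grp k == g) (1 : R).
pose M g := \sum_(k | grp k == g) ((z k)%:R : R).
have M_ge2 g : 2 <= M g by rewrite /M -sum_incidence_mx_col; apply: hm.
have NM_ge2 g : 2 <= N g - M g by rewrite /N /M -!sum_incidence_mx_col; apply: hnm.
move=> ng mg MW P V MZW D i.
have M_gt0 g : 0 < M g by apply: lt_le_trans (M_ge2 g).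
have NM_gt0 g : 0 < N g - M g by apply: lt_le_trans (NM_ge2 g).
rewrite /P /MW treatment_partial_leverage //.
rewrite /MZW /V /D; set d := (\row_i _ : 'rV_n).
have dE j : d 0 j = (N (grp j))^-1 *
    (if z j then (N (grp j) - M (grp j)) / (M (grp j) - 1)
     else M (grp j) / (N (grp j) - M (grp j) - 1)).
  rewrite mxE (bigD1 (grp j)) //= big1 => [|g ne_g]; last first.
    by rewrite mxE eq_sym (negbTE ne_g) /= mul0r mulr0 mul0r.
  by rewrite !mxE eqxx /ng /mg !sum_incidence_mx_col /N /M; case: (z j) => /=; ring.
rewrite residual_sandwich_diag // => [|j l grp_jl z_jl]; last by rewrite !dE grp_jl z_jl.
rewrite dE; have := M_ge2 (grp i); have := NM_ge2 (grp i); rewrite /N /M.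
by case: (z i) => /= *; field; rewrite !lt0r_neq0 //; lra.
Qed.
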